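(* Fix a class table in which every class has arity $1$ except one distinguished class $Z$ of arity $0$, and consider the subtyping machine it describes. For all classes $C_1,\dots,C_m,D_1,\dots,D_n$ of arity $1$ ($m,n\ge 0$), we have $C_1 \dots C_m Z \le D_1 \dots D_n Z$ if and only if there is a halting run of the subtyping machine starting from the configuration $(C_1\dots C_m Z,\ D_1\dots D_n Z)$, i.e. a finite sequence of execution steps from this configuration to the halting configuration $\bullet$.
   Context: Types are built from type variables and classes: every type variable is a type, and if $C$ has arity $m$ and $t_1,\dots,t_m$ are types then $C t_1\dots t_m$ is a type. A class table is a finite set of inheritance rules $C x_1\dots x_m \lhd D t_1 \dots t_n$ ($m,n$ the arities of $C,D$; the variables of the $t_j$ among $x_1,\dots,x_m$); it induces a relation $\lhd$ on types by $t_L\sigma \lhd t_R\sigma$ for each rule $t_L \lhd t_R$ and each substitution $\sigma$ of types for variables; $\lhd^*$ is its reflexive transitive closure. Subtyping $\le$ is defined inductively by the rule: if $A t_1\dots t_m \lhd^* C t'_1\dots t'_n$ and $t''_i \le t'_i$ for all $i$, then $A t_1\dots t_m \le C t''_1\dots t''_n$. With all classes of arity 1 except $Z$ of arity 0, every ground type has the form $C_1 C_2 \dots C_m Z$ (meaning $C_1(C_2(\cdots C_m(Z)))$). The subtyping machine has as configurations the ordered pairs $(s, s')$ of such ground types (representing the query $s \le s'$; the paper writes $(C_1\dots C_mZ, D_1\dots D_nZ)$ as $Z C_m \dots C_1 \blacktriangleleft D_1\dots D_n Z$, or equivalently $Z D_n\dots D_1 \blacktriangleright C_1\dots C_m Z$),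 plus a special halting configuration $\bullet$. Its execution steps are: $(C_1\dots C_m Z,\ Z) \leadsto \bullet$ whenever $C_1\dots C_m Z \lhd^* Z$; and, for $n\ge1$, $(C_1\dots C_m Z,\ D_1 D_2\dots D_n Z) \leadsto (D_2\dots D_n Z,\ E_2 \dots E_p Z)$ whenever $C_1\dots C_m Z \lhd^* D_1 E_2 \dots E_p Z$. *)

(* Types over a signature where every class has arity 1
   (class names of type K) except the distinguished arity-0 class Z. *)
From Stdlib Require Import List Relations.
Import ListNotations.

Inductive ty (K : Type) : Type :=
| tvar (x : nat)
| tZ
| tC (c : K) (t : ty K).
Arguments tvar {K} x.
Arguments tZ {K}.
Arguments tC {K} c t.

Fixpoint subst {K : Type} (sigma : nat -> ty K) (t : ty K) : ty K :=
  match t with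
  | tvar x => sigma x
  | tZ => tZ
  | tC c u => tC c (subst sigma u)
  end.

Fixpoint occurs {K : Type} (x : nat) (t : ty K) : Prop :=
  match t with
  | tvar y => x = y
  | tZ => False
  | tC _ u => occurs x u
  end.

Fixpoint ground {K : Type} (t : ty K) : Prop :=
  match t with
  | tvar _ => False
  | tZ => True
  | tC _ u => ground u
  end.

(* An inheritance rule t_L <| t_R: either  Z <| t_R  (t_R ground), or
   C x <| t_R  with the variables of t_R among {x}. *)
Definition wf_rule {K : Type} (r : ty K * ty K) : Prop :=
  (fst r = tZ /\ forall y, ~ occurs y (snd r)) \/
  (exists c x, fst r = tC c (tvar x) /\ forall y, occurs y (snd r) -> y = x).

Definition class_table (K : Type) := list (ty K * ty K).

Definition inh {K : Type} (CT : class_table K) (s t : ty K) : Prop :=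
  exists r sigma, In r CT /\ subst sigma (fst r) = s /\ subst sigma (snd r) = t.

Definition inh_star {K : Type} (CT : class_table K) : relation (ty K) :=
  clos_refl_trans (ty K) (inh CT).

Definition is_class_app {K : Type} (t : ty K) : Prop :=
  match t with tvar _ => False | _ => True end.

(* Subtyping, specialised to the arities of this signature. *)
Inductive sub {K : Type} (CT : class_table K) : ty K -> ty K -> Prop :=
| sub_Z s : is_class_app s -> inh_star CT s tZ -> sub CT s tZ
| sub_C s c t' t'' : is_class_app s -> inh_star CT s (tC c t') ->
    sub CT t'' t' -> sub CT s (tC c t'').

Definition build {K : Type} (cs : list K) : ty K := fold_right tC tZ cs.

(* Configurations: Some (s, s') for a query s <= s' on ground types,
   None for the halting configuration. *)
Definition config (K : Type) := option (ty K * ty K).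

Inductive step {K : Type} (CT : class_table K) : config K -> config K -> Prop :=
| step_halt s : ground s -> inh_star CT s tZ -> step CT (Some (s, tZ)) None
| step_move s d ts tt : ground s -> ground ts -> ground tt ->
    inh_star CT s (tC d tt) -> step CT (Some (s, tC d ts)) (Some (ts, tt)).

(* A derivation of s <= t walks down the spine of t, and each of its rules is
   one execution step: sub_C is step_move and sub_Z is step_halt.  The only
   side condition of the machine is that configurations stay ground, which
   holds because the right-hand side of a well-formed rule has no variable
   outside its left-hand side, so <|^* preserves groundness. *)
From Stdlib Require Import List Relations.

Section Machine.

Variables (K : Type) (CT : class_table K).

Lemma ground_subst (sigma : nat -> ty K) (t : ty K) :
  (forall y, occurs y t -> ground (sigma y)) -> ground (subst sigma t).
Proof. induction t; simpl; auto. Qed.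

Lemma ground_build (cs : list K) : ground (build cs).
Proof. induction cs; simpl; auto. Qed.

Lemma ground_is_class_app (s : ty K) : ground s -> is_class_app s.
Proof. destruct s; simpl; auto. Qed.

Lemma halting_run_sub (s t : ty K) :
  clos_refl_trans (config K) (step CT) (Some (s, t)) None -> sub CT s t.
Proof.
  intros run; apply clos_rt_rt1n in run.
  remember (Some (s, t)) as start eqn:Estart; remember None as stop eqn:Estop.
  revert s t Estart.
  induction run as [|x y z xy _ IH]; intros s t Estart; subst.
  - discriminate.
  - inversion xy; subst.
    + constructor; auto using ground_is_class_app.
    + econstructor; eauto using ground_is_class_app.
Qed.

Hypothesis HCT : Forall wf_rule CT.

Lemma inh_ground (s t : ty K) : inh CT s t -> ground s -> ground t.
Proof.
  intros [r [sigma [Hr [<- <-]]]] Gs.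
  apply ground_subst; intros y Hy.
  rewrite Forall_forall in HCT.
  destruct (HCT r Hr) as [[_ closed] | [c [x [Er vars]]]].
  - destruct (closed y Hy).
  - rewrite (vars y Hy); rewrite Er in Gs; exact Gs.
Qed.

Lemma inh_star_ground (s t : ty K) : inh_star CT s t -> ground s -> ground t.
Proof. induction 1; eauto using inh_ground. Qed.

Lemma sub_halting_run (s t : ty K) :
  ground s -> ground t -> sub CT s t ->
  clos_refl_trans (config K) (step CT) (Some (s, t)) None.
Proof.
  intros Gs Gt st; induction st as [s _ sZ | s c t' t'' _ sc _ IH] in Gs, Gt |- *.
  - apply rt_step; constructor; assumption.
  - assert (Gt' : ground (tC c t')) by eauto using inh_star_ground.
    simpl in Gt, Gt'.
    eapply rt_trans; [apply rt_step; apply step_move | apply IH]; assumption.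
Qed.

Lemma sub_iff_halting_run (s t : ty K) :
  ground s -> ground t ->
  sub CT s t <-> clos_refl_trans (config K) (step CT) (Some (s, t)) None.
Proof.
  split; [apply sub_halting_run; assumption | apply halting_run_sub].
Qed.

End Machine.

Theorem mainTheorem3 (K : Type) (CT : class_table K)
  (HCT : Forall wf_rule CT) (cs ds : list K) :
  sub CT (build cs) (build ds) <->
  clos_refl_trans (config K) (step CT) (Some (build cs, build ds)) None.
Proof.
  apply sub_iff_halting_run; auto using ground_build.
Qed.
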